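(* Let $G$ be any simple graph on $n$ vertices with chromatic number $k=\chi(G)$. Then $$\varepsilon(G)\ge\frac{n!}{k^{\,n-k}\,k!}.$$
   Context: For an undirected simple graph $G=(V,E)$, $\varepsilon(G)$ denotes the maximum, over all acyclic orientations of $E$, of the number of linear extensions of the partial order induced on $V$ (where $u<v$ iff there is a directed path from $u$ to $v$; a linear extension of a poset on an $n$-element set is an order-preserving bijection onto $[n]$). *)

From HB Require Import structures.
From mathcomp Require Import all_boot all_order all_algebra.
Set Implicit Arguments. Unset Strict Implicit. Unset Printing Implicit Defensive.

Definition simple_graph (T : finType) (e : rel T) : Prop :=
  symmetric e /\ irreflexive e.

Definition colorable (T : finType) (e : rel T) (k : nat) : Prop :=
  exists c : T -> 'I_k, forall x y, e x y -> c x != c y.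

Definition chromatic_number (T : finType) (e : rel T) (k : nat) : Prop :=
  colorable e k /\ forall j, j < k -> ~ colorable e j.

Definition orel (T : finType) (O : {set T * T}) : rel T := fun x y => (x, y) \in O.

Definition is_orientation (T : finType) (e : rel T) (O : {set T * T}) : bool :=
  [forall x, forall y,
     (orel O x y ==> e x y) && (e x y ==> (orel O x y (+) orel O y x))].

Definition acyclicb (T : finType) (O : {set T * T}) : bool :=
  [forall x, forall y, orel O x y ==> ~~ connect (orel O) y x].

Definition is_acyclic_orientation (T : finType) (e : rel T) (O : {set T * T}) : bool :=
  is_orientation e O && acyclicb O.

Definition induced_lt (T : finType) (O : {set T * T}) (u v : T) : bool :=
  (u != v) && connect (orel O) u v.

Definition linear_extensions (T : finType) (O : {set T * T}) :
    {set {ffun T -> 'I_#|T|}} :=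
  [set f : {ffun T -> 'I_#|T|} | injectiveb f &&
     [forall u, forall v, induced_lt O u v ==> (f u < f v)%N]].

Definition num_linext (T : finType) (O : {set T * T}) : nat :=
  #|linear_extensions O|.

Definition epsilon (T : finType) (e : rel T) : nat :=
  \max_(O : {set T * T} | is_acyclic_orientation e O) num_linext O.

From HB Require Import structures.
From mathcomp Require Import all_boot all_order all_algebra.
From mathcomp Require Import zify.
Import Order.TTheory GRing.Theory Num.Theory.
Set Implicit Arguments. Unset Strict Implicit.

(* Fix a proper colouring c with k = chi(G) colours; by minimality every colour
   class V_i is nonempty. Orienting every edge towards the larger colour gives an
   acyclic orientation in which every order listing V_0, then V_1, ..., then
   V_(k-1), each class in an arbitrary order, is a linear extension; hence
   epsilon(G) >= prod_i |V_i|!. The multinomial bound n! <= k! k^(n-k) prod_i n_i!,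
   valid whenever all n_i >= 1, concludes. *)

Lemma bin_leq_expS k a : 'C(k + a, a) <= k.+1 ^ a.
Proof.
elim: a => [|a IHa]; first by rewrite addn0 bin0.
rewrite -(leq_pmul2l (ltn0Sn a)) addnS -mul_bin_diag /= expnS mulnA.
by apply: leq_mul; first nia.
Qed.

Lemma bin_mul_exp_leq k a b : 'C(k + b + a, a) * k ^ b <= k.+1 ^ (b + a).
Proof.
elim: a b => [|a IHa] b.
  by rewrite bin0 mul1n addn0; case: b => // b; rewrite leq_exp2r.
elim: b => [|b IHb]; first by rewrite addn0 muln1 bin_leq_expS.
move: IHb (IHa b.+1); rewrite !(addnS, addSn) !expnS => IHb IHa'.
(* Pascal's rule splits the left side along the two induction hypotheses. *)
rewrite binS mulnDl mulnCA mulSnr.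
by apply: leq_add; rewrite // leq_mul2l IHb orbT.
Qed.

Lemma sumn_geq_size (s : seq nat) : all (fun x => 0 < x) s -> size s <= sumn s.
Proof. by elim: s => //= x s IHs /andP[x_gt0 /IHs]; lia. Qed.

Lemma fact_sumn_leq (s : seq nat) : all (fun x => 0 < x) s ->
  (sumn s)`! <= (size s)`! * size s ^ (sumn s - size s) * \prod_(x <- s) x`!.
Proof.
elim: s => [|a s IHs] /=; first by rewrite big_nil.
move=> /andP[a_gt0 /[dup] /sumn_geq_size size_le /IHs].
rewrite big_cons -(bin_fact (leq_addr (sumn s) a)) addKn.
have := bin_mul_exp_leq (size s) a (sumn s - size s).
have -> : size s + (sumn s - size s) + a = a + sumn s by lia.
have -> : a + sumn s - (size s).+1 = (sumn s - size s + a).-1 by lia.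
have -> : (size s).+1`! * (size s).+1 ^ (sumn s - size s + a).-1
          = (size s)`! * (size s).+1 ^ (sumn s - size s + a).
  by rewrite factS -mulnA mulnCA -expnS; congr (_ * (_ ^ _)); lia.
move: 'C(_, _) (_ ^ (_ - _)) (_.+1 ^ _) (a`!) (sumn s)`! (size s)`! (\prod_(x <- s) x`!).
move=> C B E A M K P CB IH.
apply: (@leq_trans (C * (A * (K * B * P)))); first by rewrite !leq_mul2l IH !orbT.
apply: (@leq_trans (C * B * (K * A * P))); first by apply: eq_leq; lia.
by apply: (leq_trans (leq_mul CB (leqnn _))); apply: eq_leq; lia.
Qed.

Fixpoint catperms (T : eqType) (ls : seq (seq T)) : seq (seq T) :=
  if ls is l :: ls' then [seq p ++ q | p <- permutations l, q <- catperms ls']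
  else [:: [::]].

Section CatPerms.
Variable T : eqType.
Implicit Types (l : seq T) (ls : seq (seq T)).

Lemma size_catperms ls : all uniq ls -> size (catperms ls) = \prod_(l <- ls) (size l)`!.
Proof.
elim: ls => [|l ls IHls] /=; first by rewrite big_nil.
by move=> /andP[ul uls]; rewrite size_allpairs size_permutations // IHls // big_cons.
Qed.

Lemma catperms_uniq ls : uniq (catperms ls).
Proof.
elim: ls => [|l ls IHls] //=.
apply: allpairs_uniq => //; first exact: permutations_uniq.
move=> [p q] [p' q'] /allpairsP[[x y] [/= px _ [-> ->]]].
move=> /allpairsP[[x' y'] [/= px' _ [-> ->]]] /= /eqP.
rewrite eqseq_cat; last first.
  by move: px px'; rewrite !mem_permutations => /perm_size -> /perm_size.
by case/andP => /eqP -> /eqP ->.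
Qed.

Lemma flatten_mem_catperms ls : flatten ls \in catperms ls.
Proof.
elim: ls => [|l ls IHls] /=; first by rewrite inE.
by apply/allpairsP; exists (l, flatten ls); rewrite mem_permutations perm_refl.
Qed.

End CatPerms.

Lemma uniq_eq_index (T : eqType) (s1 s2 : seq T) : uniq s1 -> uniq s2 ->
  s1 =i s2 -> (forall x, index x s1 = index x s2) -> s1 = s2.
Proof.
move=> u1 u2 eq12 index12.
have size12 := perm_size (uniq_perm u1 u2 eq12).
case: s1 => [|x0 s1] in u1 eq12 index12 size12 *.
  by case: s2 {u2 eq12 index12} size12.
apply: (eq_from_nth (x0 := x0) size12) => i lti.
by rewrite -[in RHS](index_uniq x0 lti u1) index12 nth_index // -eq12 mem_nth.
Qed.

Section ColorClasses.
Variables (T : finType) (k : nat) (c : T -> 'I_k).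

Definition color_class (i : nat) : seq T := [seq x <- enum T | c x == i :> nat].

Definition color_classes : seq (seq T) := map color_class (iota 0 k).

Lemma color_classes_uniq : all uniq color_classes.
Proof. by apply/allP => l /mapP[i _ ->]; rewrite filter_uniq ?enum_uniq. Qed.

Lemma mem_catperms_color_classes a m L :
  L \in catperms (map color_class (iota a m)) ->
  [/\ forall x, (x \in L) = (a <= c x < a + m), uniq L &
      forall u v, u \in L -> v \in L -> c u < c v -> index u L < index v L].
Proof.
elim: m a L => [|m IHm] a L /=.
  by rewrite inE => /eqP ->; split => // x; rewrite in_nil; apply/esym/negbTE; lia.
move=> /allpairsP[[p q] [/= p_perm /IHm[mem_q uniq_q index_q] ->]].
rewrite mem_permutations in p_perm.
have mem_p x : (x \in p) = (c x == a :> nat).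
  by rewrite (perm_mem p_perm) mem_filter mem_enum andbT.
split.
- by move=> x; rewrite mem_cat mem_p mem_q; case: eqP => /=; lia.
- rewrite cat_uniq uniq_q (perm_uniq p_perm) filter_uniq ?enum_uniq //= andbT.
  by apply/hasPn => x; rewrite mem_p mem_q; lia.
- move=> u v; rewrite !mem_cat !index_cat => u_in v_in cuv.
  have [u_p|u_p] := boolP (u \in p).
    have -> : (v \in p) = false by move: u_p; rewrite !mem_p; lia.
    by rewrite (leq_trans _ (leq_addr _ _)) ?index_mem.
  have u_q : u \in q by move: u_in; rewrite (negbTE u_p).
  have v_p : (v \in p) = false by move: u_q; rewrite mem_q mem_p; lia.
  by rewrite v_p ltn_add2l index_q //; rewrite v_p in v_in.
Qed.

Lemma mem_catperms_color_classesP L : L \in catperms color_classes ->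
  [/\ forall x, x \in L, uniq L, size L = #|T| &
      forall u v, c u < c v -> index u L < index v L].
Proof.
move=> /mem_catperms_color_classes[mem_L uniq_L index_L].
have {}mem_L x : x \in L by rewrite mem_L add0n ltn_ord.
split=> // [|u v]; last exact: index_L.
rewrite cardE; apply/perm_size/uniq_perm; rewrite ?enum_uniq // => x.
by rewrite mem_enum mem_L.
Qed.

End ColorClasses.

Section ColorOrientation.
Variables (T : finType) (e : rel T) (k : nat) (c : T -> 'I_k).

Definition color_orientation : {set T * T} :=
  [set p : T * T | e p.1 p.2 && (c p.1 < c p.2)].

Lemma orel_color_orientation x y : orel color_orientation x y = e x y && (c x < c y).
Proof. by rewrite /orel inE. Qed.

Lemma connect_color_orientation u v :
  connect (orel color_orientation) u v -> u = v \/ c u < c v.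
Proof.
move=> /connectP[p]; elim: p u => [|y p IHp] u /=; first by move=> _ ->; left.
rewrite orel_color_orientation => /andP[/andP[_ cuy] path_p] v_last; right.
by case: (IHp y path_p v_last) => [<- // | /(ltn_trans cuy)].
Qed.

Lemma color_orientation_acyclic :
  symmetric e -> (forall x y, e x y -> c x != c y) ->
  is_acyclic_orientation e color_orientation.
Proof.
move=> e_sym c_proper; apply/andP; split.
  apply/forallP => x; apply/forallP => y.
  rewrite !orel_color_orientation [e y x]e_sym; case exy: (e x y) => //=.
  by have := c_proper _ _ exy; rewrite -val_eqE /=; case: ltngtP.
apply/forallP => x; apply/forallP => y; apply/implyP.
rewrite orel_color_orientation => /andP[exy cxy].
apply/negP => /connect_color_orientation[eyx | /(ltn_trans cxy)]; last by rewrite ltnn.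
by move: (c_proper _ _ exy); rewrite eyx eqxx.
Qed.

(* The default [enum_rank x] is never used: on the lists below [index x L < #|T|]. *)
Definition linext_of_seq (L : seq T) : {ffun T -> 'I_#|T|} :=
  [ffun x => insubd (enum_rank x) (index x L)].

Lemma linext_of_seq_val L x :
  L \in catperms (color_classes c) -> val (linext_of_seq L x) = index x L.
Proof.
move=> /mem_catperms_color_classesP[mem_L _ size_L _].
have index_lt : index x L < #|T| by rewrite -size_L index_mem mem_L.
by rewrite ffunE val_insubd index_lt.
Qed.

Lemma linext_of_seq_linext L : L \in catperms (color_classes c) ->
  linext_of_seq L \in linear_extensions color_orientation.
Proof.
move=> L_in; have [mem_L _ _ index_L] := mem_catperms_color_classesP L_in.
rewrite inE; apply/andP; split.
  apply/injectiveP => x y /(congr1 val); rewrite !linext_of_seq_val //.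
  exact: index_inj.
apply/forallP => u; apply/forallP => v; apply/implyP => /andP[neq_uv conn_uv].
rewrite !linext_of_seq_val //.
case: (connect_color_orientation conn_uv) => [eq_uv | /index_L //].
by rewrite eq_uv eqxx in neq_uv.
Qed.

Lemma linext_of_seq_inj : {in catperms (color_classes c) &, injective linext_of_seq}.
Proof.
move=> L1 L2 L1_in L2_in eq_f.
have [mem1 uniq1 _ _] := mem_catperms_color_classesP L1_in.
have [mem2 uniq2 _ _] := mem_catperms_color_classesP L2_in.
apply: uniq_eq_index => // [x | x]; first by rewrite mem1 mem2.
by rewrite -(linext_of_seq_val x L1_in) -(linext_of_seq_val x L2_in) eq_f.
Qed.

Lemma prod_fact_color_classes_leq_num_linext :
  \prod_(l <- color_classes c) (size l)`! <= num_linext color_orientation.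
Proof.
rewrite -size_catperms ?color_classes_uniq //.
rewrite -(size_map linext_of_seq) -(card_uniqP _); last first.
  by rewrite map_inj_in_uniq ?catperms_uniq //; exact: linext_of_seq_inj.
apply: subset_leq_card; apply/subsetP => f /mapP[L L_in ->].
exact: linext_of_seq_linext.
Qed.

End ColorOrientation.

Lemma minimal_coloring_surj (T : finType) (e : rel T) k (c : T -> 'I_k) :
  (forall x y, e x y -> c x != c y) -> (forall j, j < k -> ~ colorable e j) ->
  forall i : 'I_k, exists x, c x = i.
Proof.
move=> c_proper c_min i.
have [/existsP[x /eqP cx] | /existsPn c_miss] := boolP [exists x, c x == i].
  by exists x.
have lt_pred_k : k.-1 < k by have := ltn_ord i; lia.
case: (c_min _ lt_pred_k).
(* Colour i is unused, so the colours above it can be shifted down by one. *)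
have shift_lt x : (if c x < i then c x : nat else (c x).-1) < k.-1.
  by move: (c_miss x) (ltn_ord (c x)) (ltn_ord i); rewrite -val_eqE /=; case: ifP; lia.
exists (fun x => Ordinal (shift_lt x)) => x y exy.
move: (c_proper _ _ exy) (c_miss x) (c_miss y); rewrite -!val_eqE /=.
by case: ifP; case: ifP; lia.
Qed.

Lemma fact_card_leq_epsilon (T : finType) (e : rel T) k :
  simple_graph e -> chromatic_number e k -> #|T|`! <= k`! * k ^ (#|T| - k) * epsilon e.
Proof.
move=> [e_sym _] [[c c_proper] c_min].
have classes_pos : all (fun x => 0 < x) (map size (color_classes c)).
  apply/allP => _ /mapP[_ /mapP[i i_lt ->] ->]; rewrite mem_iota add0n in i_lt.
  have [x cx] := minimal_coloring_surj c_proper c_min (Ordinal i_lt).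
  by rewrite size_filter -has_count; apply/hasP; exists x; rewrite ?mem_enum //= cx.
have sum_classes : sumn (map size (color_classes c)) = #|T|.
  have [_ _ <- _] := mem_catperms_color_classesP (flatten_mem_catperms (color_classes c)).
  by rewrite size_flatten.
have := fact_sumn_leq classes_pos; rewrite sum_classes !size_map size_iota big_map.
move/leq_trans; apply; rewrite leq_mul2l; apply/orP; right.
apply: leq_trans (prod_fact_color_classes_leq_num_linext e c) _.
apply: (leq_bigmax_cond (F := fun O => num_linext O)).
exact: color_orientation_acyclic.
Qed.

Unset Implicit Arguments.
Local Open Scope ring_scope.

Theorem corollary4p4 (T : finType) (e : rel T) (k : nat) :
  simple_graph e -> chromatic_number e k ->
  ((#|T|)`!%:R / ((k ^ (#|T| - k))%N%:R * (k`!)%:R) <= (epsilon e)%:R :> rat).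
Proof.
move=> e_simple e_chi; have := fact_card_leq_epsilon e_simple e_chi.
rewrite -natrM; have [-> | denom_gt0] := posnP (k ^ (#|T| - k) * k`!)%N.
  by rewrite invr0 mulr0 ler0n.
by rewrite ler_pdivrMr ?ltr0n // -natrM ler_nat mulnC [(k`! * _)%N]mulnC.
Qed.
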